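(* Let $\mathbf n\ge 2$, let $A'=\mathbb C^{2\mathbf n-1}$ with basis $e_1,\dots,e_{2\mathbf n-1}$, and let $U,V\cong\mathbb C^{\mathbf n}$ with bases $u_1,\dots,u_{\mathbf n}$ and $v_1,\dots,v_{\mathbf n}$. Define the linear map $\psi:\Lambda^{\mathbf n-1}A'\otimes V\to\Lambda^{\mathbf n}A'\otimes U$ by $$\psi(e_S\otimes v_k)=\sum_{\substack{1\le m\le\mathbf n\\ (m,k)\ne(\mathbf n,1)}} e_{m+k-1}\wedge e_S\otimes u_m,$$ where for $S=\{s_1<\dots<s_{\mathbf n-1}\}\subset\{1,\dots,2\mathbf n-1\}$, $e_S=e_{s_1}\wedge\cdots\wedge e_{s_{\mathbf n-1}}$. Then $\operatorname{rank}\psi=\mathbf n\binom{2\mathbf n-1}{\mathbf n}-1$; more precisely, the image of $\psi$ is the span of all basis vectors $e_P\otimes u_l$ ($P\subset\{1,\dots,2\mathbf n-1\}$, $|P|=\mathbf n$, $1\le l\le\mathbf n$) other than $e_{\{1,\dots,\mathbf n\}}\otimes u_{\mathbf n}$.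
   Context: This map is the Koszul flattening $\Lambda^{\mathbf n-1}A'\otimes V\to\Lambda^{\mathbf n}A'\otimes U$ of the reduced tensor $M^{red}_{\langle 1,1,\mathbf n\rangle}$ restricted via the linear map $x^i_j\mapsto e_{i+j-1}$. *)

From HB Require Import structures.
From mathcomp Require Import all_boot all_order all_algebra all_field.
Set Implicit Arguments. Unset Strict Implicit. Unset Printing Implicit Defensive.
Import Order.TTheory GRing.Theory Num.Theory.
Local Open Scope ring_scope.

(* Indices are 0-based: e_1..e_{2n-1} ~ 'I_(2n-1), u_1..u_n, v_1..v_n ~ 'I_n. *)

(* basis of Lambda^{n-1} A' (x) V : pairs (S, k), S an (n-1)-subset, k : 'I_n *)
Definition dom_idx (n : nat) : finType :=
  ({S : {set 'I_(2 * n - 1)} | #|S| == n.-1} * 'I_n)%type.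

(* basis of Lambda^{n} A' (x) U : pairs (P, l), P an n-subset, l : 'I_n *)
Definition cod_idx (n : nat) : finType :=
  ({P : {set 'I_(2 * n - 1)} | #|P| == n} * 'I_n)%type.

(* coefficient of e_P (x) u_l in psi(e_S (x) v_k):
   only the term m = l contributes, with wedge factor e_{m+k-1} /\ e_S
   (1-based) = e_{l+k} /\ e_S (0-based), which equals
   (-1)^{#{s in S | s < l+k}} e_{S u {l+k}} if l+k not in S, and 0 otherwise;
   the term (m,k) = (n,1) (0-based (n-1,0)) is excluded. *)
Definition psi_coef (n : nat) (S : {set 'I_(2 * n - 1)}) (k : 'I_n)
    (P : {set 'I_(2 * n - 1)}) (l : 'I_n) : algC :=
  if ((val l, val k) != (n.-1, 0%N)) &&
     [exists j : 'I_(2 * n - 1),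
        [&& val j == (val l + val k)%N, j \notin S & P == j |: S]]
  then (-1) ^+ #|[set s in S | (val s < val l + val k)%N]|
  else 0.

(* matrix of psi in the bases above (row-vector convention: row (S,k) is the
   coordinate vector of psi(e_S (x) v_k)). *)
Definition psi_mx (n : nat) : 'M[algC]_(#|dom_idx n|, #|cod_idx n|) :=
  \matrix_(i, j)
    let: (Sx, k) := enum_val i in
    let: (Px, l) := enum_val j in psi_coef (val Sx) k (val Px) l.

(* the exceptional basis vector e_{1..n} (x) u_n *)
Definition is_exceptional (n : nat) (j : 'I_#|cod_idx n|) : bool :=
  let: (Px, l) := enum_val j in
  (val Px == [set i : 'I_(2 * n - 1) | (val i < n)%N]) && (val l == n.-1).

Definition span_nonexc (n : nat) : 'M[algC]_(#|cod_idx n|) :=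
  (\sum_(j | ~~ is_exceptional j) <<(delta_mx 0 j : 'rV[algC]_(#|cod_idx n|))>>)%MS.

From HB Require Import structures.
From mathcomp Require Import all_boot all_order all_algebra all_field.
From mathcomp Require Import zify.
Import Order.TTheory GRing.Theory Num.Theory.
Local Open Scope ring_scope.
Set Implicit Arguments. Unset Strict Implicit. Unset Printing Implicit Defensive.

(* Fix r, c, put o = r + c and fix
   a set Z of r indices below o; keep only the sources e_S (x) v_k with
   S meeting [0, o) in Z and k >= c, and only the coordinates e_P (x) u_l with
   l >= r.  Every surviving term e_(l+k) /\ e_S (x) u_l has l + k >= o, so
   P meets [0, o) in Z too: this truncation of psi is a map of the same shape
   on the ground set [o, 2n-1), with n - r indices l and n - c indices k.
   By descending induction on o it is onto, splitting on (P, l):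
   - if o is not in P, the sources with k >= c + 1 already suffice;
   - if o is in P and l = r, the row of (P \ o, c) has e_P (x) u_r as its only
     term with l = r, and its other terms fall under the first case;
   - if o is in P and l > r, pass to (r + 1, c, Z + o) and remove from those
     rows their terms with l = r, given by the second case.
   The term (l, k) = (n-1, 0) missing from psi is needed only as the pivot of
   the second case for (P, l) = ([0, n), n-1), and it is the only term that
   could reach e_[0,n) (x) u_(n-1): that coordinate is lost, and no other. *)

Section DeltaSubmx.
Variables (F : fieldType) (m p : nat) (V : 'M[F]_(p, m)).
Local Notation delta j := (delta_mx 0 j : 'rV[F]_m).

Lemma submx_deltas (v : 'rV[F]_m) :
  (forall j, v 0 j != 0 -> (delta j <= V)%MS) -> (v <= V)%MS.
Proof.
move=> vV; rewrite [v]row_sum_delta; apply: summx_sub => j _.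
have [->|/vV] := eqVneq (v 0 j) 0; first by rewrite scale0r sub0mx.
exact: scalemx_sub.
Qed.

Lemma delta_submx_pivot (v : 'rV[F]_m) t :
  (v <= V)%MS -> v 0 t != 0 ->
  (forall j, j != t -> v 0 j != 0 -> (delta j <= V)%MS) -> (delta t <= V)%MS.
Proof.
move=> vV vt othersV.
have -> : delta t = (v 0 t)^-1 *: (v - \sum_(j | j != t) v 0 j *: delta j).
  by rewrite [v in v - _]row_sum_delta (bigD1 t) //= addrK scalerA mulVf ?scale1r.
rewrite scalemx_sub // addmx_sub // -scaleN1r scalemx_sub // summx_sub // => j jt.
have [->|/othersV] := eqVneq (v 0 j) 0; first by rewrite scale0r sub0mx.
by move/(_ jt); apply: scalemx_sub.
Qed.

End DeltaSubmx.

Section PsiImage.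
Local Open Scope nat_scope.
Variable n : nat.
Local Notation idx := 'I_(2 * n - 1).
Local Notation cod := 'I_#|cod_idx n|.
Local Notation dom := 'I_#|dom_idx n|.
Local Notation delta j := (delta_mx 0%R j : 'rV[algC]_#|cod_idx n|).

Definition below (o : nat) : {set idx} := [set x : idx | x < o].

Lemma in_below o x : (x \in below o) = (x < o).
Proof. by rewrite inE. Qed.

Lemma card_below o : o <= 2 * n - 1 -> #|below o| = o.
Proof.
move=> o_le; have -> : below o = [set widen_ord o_le y | y : 'I_o].
  apply/setP => x; rewrite in_below; apply/idP/imsetP => [x_lt|[y _ ->]] //=.
  by exists (Ordinal x_lt) => //; apply/val_inj.
by rewrite card_imset ?cardsT ?card_ord // => y z /(congr1 val) /= /val_inj.
Qed.

Lemma card_above (X : {set idx}) o : o <= 2 * n - 1 ->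
  #|X :\: below o| <= 2 * n - 1 - o.
Proof.
move=> o_le; apply: leq_trans (subset_leq_card (_ : _ \subset ~: below o)) _.
  by apply/subsetP => y; rewrite !inE => /andP[].
by rewrite cardsCs setCK card_ord card_below.
Qed.

Lemma setU1I_below (x : idx) (Z : {set idx}) o :
  x = o :> nat -> Z \subset below o -> (x |: Z) :&: below o = Z.
Proof.
move=> xo /subsetP Zo; apply/setP => y; rewrite !inE.
case: (boolP (y \in Z)) => [/Zo|_]; first by rewrite in_below => ->; rewrite orbT.
by rewrite orbF; case: eqP => [->|]; rewrite ?xo ?ltnn.
Qed.

Lemma setU1I_below_ge (x : idx) (Y : {set idx}) o :
  o <= x -> (x |: Y) :&: below o = Y :&: below o.
Proof.
move=> ox; apply/setP => y; rewrite !inE.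
by case: eqP => [->|] //=; rewrite ltnNge ox andbF.
Qed.

Lemma setD1I_below (x : idx) (X : {set idx}) o :
  x = o :> nat -> (X :\ x) :&: below o = X :&: below o.
Proof.
move=> xo; apply/setP => y; rewrite !inE.
by case: eqP => [->|] //=; rewrite xo ltnn !andbF.
Qed.

Lemma setI_belowS (Y : {set idx}) o :
  Y :&: below o.+1 :&: below o = Y :&: below o.
Proof.
rewrite -setIA; congr (_ :&: _).
by apply/setIidPr/subsetP => y; rewrite !in_below => /ltnW.
Qed.

Lemma setI_belowS_mem (x : idx) (X : {set idx}) o :
  x \in X -> x = o :> nat -> X :&: below o.+1 = x |: (X :&: below o).
Proof.
move=> xX xo; apply/setP => y; rewrite !inE ltnS leq_eqVlt.
case: (eqVneq y x) => [->|yx]; first by rewrite xX xo eqxx.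
by rewrite -xo val_eqE (negbTE yx).
Qed.

Lemma setI_belowS_nomem (X : {set idx}) o :
  ~~ [exists x in X, x == o :> nat] -> X :&: below o.+1 = X :&: below o.
Proof.
move=> noo; apply/setP => y; rewrite !inE ltnS leq_eqVlt.
case yX: (y \in X) => //=; case: eqP => //= yo.
by case/negP: noo; apply/existsP; exists y; rewrite yX yo eqxx.
Qed.

Lemma setU1D1I_below (x y : idx) (X : {set idx}) o :
  x = o :> nat -> o < y -> (y |: (X :\ x)) :&: below o.+1 = X :&: below o.
Proof.
move=> xo oy; rewrite setU1I_below_ge // setI_belowS_nomem ?setD1I_below //.
apply/negP => /existsP[z /andP[]]; rewrite !inE => /andP[zx _] /eqP zo.
by case/eqP: zx; apply/val_inj; rewrite /= zo xo.
Qed.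

Definition tgt_set (j : cod) : {set idx} := val (enum_val j).1.
Definition tgt_u (j : cod) : nat := (enum_val j).2.
Definition src_set (i : dom) : {set idx} := val (enum_val i).1.
Definition src_v (i : dom) : nat := (enum_val i).2.

Lemma card_tgt_set j : #|tgt_set j| = n.
Proof. exact/eqP/(valP (enum_val j).1). Qed.

Lemma tgt_u_lt j : tgt_u j < n.
Proof. exact: ltn_ord. Qed.

Lemma cod_idx_inj j1 j2 :
  tgt_set j1 = tgt_set j2 -> tgt_u j1 = tgt_u j2 -> j1 = j2.
Proof.
move=> eP el; apply: enum_val_inj.
rewrite [enum_val j1]surjective_pairing [enum_val j2]surjective_pairing.
by congr pair; apply: val_inj.
Qed.

Lemma is_exceptionalE j :
  is_exceptional j = (tgt_set j == below n) && (tgt_u j == n.-1).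
Proof. by rewrite /is_exceptional /tgt_set /tgt_u; case: (enum_val j). Qed.

Lemma psi_mxE i j : psi_mx n i j =
  psi_coef (src_set i) (enum_val i).2 (tgt_set j) (enum_val j).2.
Proof.
by rewrite mxE /src_set /tgt_set; case: (enum_val i) => ? ?; case: (enum_val j).
Qed.

Lemma psi_mx_supp i j : psi_mx n i j != 0%R ->
  (tgt_u j, src_v i) != (n.-1, 0) /\
  exists x : idx, [/\ x = tgt_u j + src_v i :> nat, x \notin src_set i
                    & tgt_set j = x |: src_set i].
Proof.
rewrite psi_mxE /psi_coef; case: ifP; last by rewrite eqxx.
by case/andP=> excl /existsP[x /and3P[/eqP ? ? /eqP ?]] _; split=> //; exists x.
Qed.

Lemma psi_mx_neq0 i j (x : idx) :
  (tgt_u j, src_v i) != (n.-1, 0) -> x = tgt_u j + src_v i :> nat ->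
  x \notin src_set i -> tgt_set j = x |: src_set i -> psi_mx n i j != 0%R.
Proof.
move=> excl xE xS PE; rewrite psi_mxE /psi_coef ifT ?signr_eq0 //.
by rewrite excl; apply/existsP; exists x; rewrite xS PE eqxx !andbT; apply/eqP.
Qed.

Lemma psi_mx_exceptional i j : is_exceptional j -> psi_mx n i j = 0%R.
Proof.
rewrite is_exceptionalE => /andP[/eqP Pe /eqP le]; apply/eqP/negPn/negP.
case/psi_mx_supp => excl [x [xE _ PE]].
have : x \in tgt_set j by rewrite PE setU11.
rewrite Pe in_below xE le; move: excl; rewrite le.
by case: (src_v i) => [|k]; [rewrite eqxx | have := tgt_u_lt j; lia].
Qed.

Definition trunc_row (r : nat) (i : dom) : 'rV[algC]_#|cod_idx n| :=
  \row_j (if r <= tgt_u j then psi_mx n i j else 0%R).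

Lemma trunc_rowSE r i j : (trunc_row r.+1 i - trunc_row r i)%R 0%R j =
  if r == tgt_u j then (- psi_mx n i j)%R else 0%R.
Proof. by rewrite !mxE; case: ltngtP; rewrite ?subrr ?sub0r. Qed.

Definition trunc_source r c (Z : {set idx}) (i : dom) :=
  (src_set i :&: below (r + c) == Z) && (c <= src_v i).

Definition trunc_span r c (Z : {set idx}) : 'M[algC]_#|cod_idx n| :=
  (\sum_(i | trunc_source r c Z i) <<trunc_row r i>>)%MS.

Lemma trunc_row_sub r c (Z : {set idx}) i :
  trunc_source r c Z i -> (trunc_row r i <= trunc_span r c Z)%MS.
Proof. by move=> iZ; apply: (sumsmx_sup i) => //; rewrite genmxE. Qed.

Lemma trunc_spanS r c (Z : {set idx}) : Z \subset below (r + c) ->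
  (trunc_span r c.+1 Z <= trunc_span r c Z)%MS.
Proof.
move=> Zsub; apply/sumsmx_subP => i /andP[/eqP SZ ck]; rewrite genmxE.
apply: trunc_row_sub; rewrite /trunc_source (ltnW ck) andbT.
by rewrite -(setI_belowS (src_set i)) -addnS SZ; apply/eqP/setIidPl.
Qed.

Lemma trunc_spanSr r c (Z : {set idx}) (x : idx) :
  x = r + c :> nat -> Z \subset below (r + c) ->
  (forall j, tgt_u j = r -> tgt_set j :&: below (r + c) = Z ->
     (delta j <= trunc_span r c Z)%MS) ->
  (trunc_span r.+1 c (x |: Z) <= trunc_span r c Z)%MS.
Proof.
move=> xE Zsub rowr; apply/sumsmx_subP => i /andP[/eqP SZ ck]; rewrite genmxE.
have SZ0 : src_set i :&: below (r + c) = Z.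
  by rewrite -(setI_belowS (src_set i)) -addSn SZ setU1I_below.
have -> : trunc_row r.+1 i = (trunc_row r i + (trunc_row r.+1 i - trunc_row r i))%R.
  by rewrite addrC subrK.
rewrite addmx_sub ?trunc_row_sub ?/trunc_source ?SZ0 ?eqxx //.
apply: submx_deltas => j; rewrite trunc_rowSE.
have [lr|_] := eqVneq r (tgt_u j); last by rewrite eqxx.
rewrite oppr_eq0 => /psi_mx_supp[_ [y [yE _ PE]]].
by apply: rowr; rewrite // PE setU1I_below_ge ?SZ0 // yE -lr leq_add2l.
Qed.

Definition trunc_onto r c := forall j,
  (0 < c) || ~~ is_exceptional j ->
  #|tgt_set j :&: below (r + c)| = r -> r <= tgt_u j ->
  (delta j <= trunc_span r c (tgt_set j :&: below (r + c)))%MS.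

Lemma trunc_onto_notin r c j : trunc_onto r c.+1 ->
  ~~ [exists x in tgt_set j, x == r + c :> nat] ->
  #|tgt_set j :&: below (r + c)| = r -> r <= tgt_u j ->
  (delta j <= trunc_span r c (tgt_set j :&: below (r + c)))%MS.
Proof.
move=> IH noo Zr rl; have := IH j isT; rewrite addnS (setI_belowS_nomem noo).
by move=> /(_ Zr rl) /submx_trans; apply; rewrite trunc_spanS ?subsetIr.
Qed.

Lemma trunc_onto_pivot r c j (x : idx) : trunc_onto r c.+1 ->
  x \in tgt_set j -> x = r + c :> nat -> tgt_u j = r -> (r, c) != (n.-1, 0) ->
  #|tgt_set j :&: below (r + c)| = r ->
  (delta j <= trunc_span r c (tgt_set j :&: below (r + c)))%MS.
Proof.
move=> IH xP xE lr excl Zr; set X := tgt_set j.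
have X_card : #|X| = n := card_tgt_set j.
have c_lt : c < n.
  have := card_above X (ltnW (ltn_ord x)); rewrite xE.
  have := cardsID (below (r + c)) X; rewrite X_card Zr.
  by have := tgt_u_lt j; have := ltn_ord x; lia.
have S_card : #|X :\ x| == n.-1.
  by have := cardsD1 x X; rewrite xP X_card add1n => /(congr1 predn) /= <-.
pose src : dom_idx n := (exist _ (X :\ x) S_card, Ordinal c_lt).
pose i := enum_rank src.
have Si : src_set i = X :\ x by rewrite /src_set enum_rankK.
have ki : src_v i = c by rewrite /src_v enum_rankK.
apply: (delta_submx_pivot (v := trunc_row r i)).
- apply: trunc_row_sub.
  by rewrite /trunc_source Si ki (setD1I_below _ xE) eqxx leqnn.
- by rewrite mxE lr leqnn (psi_mx_neq0 (x := x)) ?lr ?ki ?Si ?setD11 ?setD1K.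
move=> j' j'j; rewrite mxE; case: ifP => [rl'|_]; last by rewrite eqxx.
case/psi_mx_supp => _ [y [yE _ PE]]; rewrite Si ki in yE PE.
have l'_gt : r < tgt_u j'.
  rewrite ltn_neqAle rl' andbT; apply: contra j'j => /eqP lr'.
  have yx : y = x by apply/val_inj; rewrite /= yE xE lr'.
  by apply/eqP/cod_idx_inj; rewrite ?PE ?yx ?setD1K // -lr'.
have := IH j' isT; rewrite addnS PE setU1D1I_below ?yE ?ltn_add2r //.
by move=> /(_ Zr rl') /submx_trans; apply; rewrite trunc_spanS ?subsetIr.
Qed.

Lemma trunc_onto_row r c : trunc_onto r c.+1 -> (r, c) != (n.-1, 0) ->
  forall j, tgt_u j = r -> #|tgt_set j :&: below (r + c)| = r ->
  (delta j <= trunc_span r c (tgt_set j :&: below (r + c)))%MS.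
Proof.
move=> IH excl j lr Zr.
case: (boolP [exists x in tgt_set j, x == r + c :> nat]) => [|noo].
  by case/existsP=> x /andP[xP /eqP xE]; apply: (trunc_onto_pivot IH xP).
by apply: trunc_onto_notin; rewrite ?lr.
Qed.

Lemma trunc_onto_up r c j (x : idx) :
  trunc_onto r c.+1 -> (r, c) != (n.-1, 0) ->
  x \in tgt_set j -> x = r + c :> nat -> #|tgt_set j :&: below (r + c)| = r ->
  (delta j <= trunc_span r.+1 c (tgt_set j :&: below (r.+1 + c)))%MS ->
  (delta j <= trunc_span r c (tgt_set j :&: below (r + c)))%MS.
Proof.
move=> IH excl xP xE Zr; rewrite addSn (setI_belowS_mem xP xE).
move/submx_trans; apply; apply: trunc_spanSr => // [|j' lr' Z'].
  exact: subsetIr.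
by rewrite -Z'; apply: (trunc_onto_row IH excl); rewrite ?Z'.
Qed.

Lemma exceptional_pivot j (x : idx) :
  x \in tgt_set j -> x = n.-1 :> nat -> tgt_u j = n.-1 ->
  #|tgt_set j :&: below n.-1| = n.-1 -> is_exceptional j.
Proof.
move=> xP xE le Zc; have n_gt0 := leq_ltn_trans (leq0n _) (tgt_u_lt j).
have below_sub : below n.-1 \subset tgt_set j.
  have : tgt_set j :&: below n.-1 == below n.-1.
    by rewrite eqEcard subsetIr Zc card_below //; lia.
  by move/eqP <-; apply: subsetIl.
rewrite is_exceptionalE le eqxx andbT eq_sym eqEcard card_tgt_set.
rewrite card_below ?leqnn ?andbT; last by lia.
apply/subsetP => y; rewrite in_below => y_lt.
have [y_lt'|] := ltnP y n.-1; first by rewrite (subsetP below_sub) ?in_below.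
by move=> y_ge; have -> : y = x by apply/val_inj; rewrite /= xE; lia.
Qed.

Lemma trunc_ontoS r c :
  trunc_onto r c.+1 -> trunc_onto r.+1 c -> trunc_onto r c.
Proof.
move=> IHc IHr j ok Zr rl.
case: (boolP [exists x in tgt_set j, x == r + c :> nat]) => [|noo]; last first.
  exact: trunc_onto_notin.
case/existsP=> x /andP[xP /eqP xE].
case: (ltngtP r (tgt_u j)) rl => // [rl _|lr _].
  have excl : (r, c) != (n.-1, 0).
    by apply: contraTneq rl => -[-> _]; have := tgt_u_lt j; lia.
  apply: (trunc_onto_up IHc excl xP xE Zr); apply: IHr => //.
  have xZ : x \notin tgt_set j :&: below (r + c) by rewrite !inE xE ltnn andbF.
  by rewrite addSn (setI_belowS_mem xP xE) cardsU1 xZ Zr.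
apply: (trunc_onto_pivot IHc xP xE (esym lr)) => //.
apply: contraTneq ok => -[rE c0]; rewrite c0 /= negbK.
apply: (exceptional_pivot xP); first by rewrite xE c0 addn0.
  by rewrite -lr.
by move: Zr; rewrite c0 addn0 rE.
Qed.

Lemma trunc_onto_all d r c : 2 * n <= r + c + d -> trunc_onto r c.
Proof.
elim: d r c => [|d IH] r c big; last first.
  by apply: trunc_ontoS; apply: IH; lia.
move=> j _ Zr rl; have PZ : tgt_set j :&: below (r + c) = tgt_set j.
  apply/setIidPl/subsetP => y _; rewrite in_below.
  by apply: leq_trans (ltn_ord y) _; lia.
by move: Zr rl; rewrite PZ card_tgt_set => <-; rewrite leqNgt tgt_u_lt.
Qed.

Lemma delta_nonexc_sub_psi j : ~~ is_exceptional j -> (delta j <= psi_mx n)%MS.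
Proof.
move=> nexc; have below0 : below (0 + 0) = set0.
  by apply/setP => y; rewrite !inE.
have := @trunc_onto_all (2 * n) 0 0 (leq_addl _ _) j.
rewrite nexc below0 setI0 cards0 => /(_ isT erefl (leq0n _)) /submx_trans; apply.
apply/sumsmx_subP => i _; rewrite genmxE.
have -> : trunc_row 0 i = row i (psi_mx n) by apply/rowP => k; rewrite !mxE.
exact: row_sub.
Qed.

Lemma psi_mx_sub_span_nonexc : (psi_mx n <= span_nonexc n)%MS.
Proof.
apply/row_subP => i; apply: submx_deltas => j; rewrite mxE => ij_neq0.
apply: (sumsmx_sup j); last by rewrite genmxE.
by apply: contra ij_neq0 => /(psi_mx_exceptional i)->.
Qed.

Lemma span_nonexc_sub_psi_mx : (span_nonexc n <= psi_mx n)%MS.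
Proof. by apply/sumsmx_subP => j nexc; rewrite genmxE delta_nonexc_sub_psi. Qed.

Lemma card_cod_idx : #|cod_idx n| = n * 'C(2 * n - 1, n).
Proof.
rewrite /cod_idx card_prod card_sig card_ord mulnC -[in RHS](card_ord (2 * n - 1)).
by rewrite -card_draws; congr (_ * _); apply: eq_card => P; rewrite !inE.
Qed.

Lemma rank_span_nonexc : 0 < n -> \rank (span_nonexc n) = #|cod_idx n|.-1.
Proof.
move=> n_gt0; have /mxdirectP -> /= : mxdirect (span_nonexc n).
  exact: (@mxdirect_delta _ _ _ _ (fun j => j)).
under eq_bigr do rewrite genmxE mxrank_delta.
have below_card : #|below n| == n by rewrite card_below //; lia.
have n1_lt : n.-1 < n by rewrite prednK.
pose j0 := enum_rank ((exist _ (below n) below_card, Ordinal n1_lt) : cod_idx n).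
have excE j : is_exceptional j = (j == j0).
  rewrite is_exceptionalE; apply/idP/eqP => [/andP[/eqP P0 /eqP l0]|->].
    by apply: cod_idx_inj; rewrite /tgt_set /tgt_u enum_rankK.
  by rewrite /tgt_set /tgt_u enum_rankK !eqxx.
rewrite sum1_card -[in RHS](card_ord #|cod_idx n|) -(cardC (pred1 j0)) card1 /=.
by apply: eq_card => j; rewrite !inE unfold_in /= excE.
Qed.

End PsiImage.

Theorem mainTheorem11 (n : nat) (hn : (2 <= n)%N) :
  \rank (psi_mx n) = (n * 'C(2 * n - 1, n) - 1)%N /\
  (psi_mx n == span_nonexc n)%MS.
Proof.
have psiE : (psi_mx n == span_nonexc n)%MS.
  by rewrite psi_mx_sub_span_nonexc span_nonexc_sub_psi_mx.
split=> //; rewrite (eqmx_rank psiE) rank_span_nonexc ?card_cod_idx ?subn1 //.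
exact: ltnW.
Qed.
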